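(* Fix $\theta$ with $\phi(\theta)<\beta$. If $\tau_1^d(\theta)<\tau_2^d(\theta)$ then $\tau^\star(\theta)\in(\tau_1^d(\theta),\tau_2^d(\theta))$; if $\tau_2^d(\theta)<\tau_1^d(\theta)$ then $\tau^\star(\theta)\in(\tau_2^d(\theta),\tau_1^d(\theta))$.
   Context: Setup. Let $Q\in\{0,1\}$ be a random variable with $\mathbb P(Q=1)=\pi\in(0,1)$, and let $(\Theta,\Gamma)$ be a real-valued random vector whose conditional joint density given $Q=1$ is $h_q$ and given $Q=0$ is $h_u$, both strictly positive on $\mathbb R^2$. Monotone likelihood ratio assumption: $l(\theta,\gamma)=h_q(\theta,\gamma)/h_u(\theta,\gamma)$ is continuous and strictly increasing in each of $\theta$ and $\gamma$, and for each $\theta$ the map $\gamma\mapsto l(\theta,\gamma)$ has infimum $0$ and supremum $+\infty$. Fix payoffs $x_q>0$, $x_u>0$. For $\tau\in(-x_u,x_q)$ let $A(\tau)=\mathbb 1\{l(\Theta,\Gamma)>\frac{(1-\pi)(x_u+\tau)}{\pi(x_q-\tau)}\}$, $s_1(\theta,\tau)=\mathbb E[Q\mid\Theta=\theta,A(\tau)=1]$, $s_2(\theta,\tau)=\mathbb E[A(\tau)\mid\Theta=\theta]$, $\phi(\theta)=\mathbb P(Q=1\mid\Theta=\theta)$. The equalizing prejudice $\tau^\star(\theta)$ is the unique $\tau\in(-x_u,x_q)$ with $s_1(\theta,\tau)=s_2(\theta,\tau)$. Fix a cutoff $c\in(-x_u,x_q)$ and let $\beta=(x_u+c)/(x_q+x_u)\in(0,1)$.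 The critical prejudice $\tau_k^d(\theta)$, $k=1,2$, is the unique $\tau\in(-x_u,x_q)$ with $s_k(\theta,\tau)=\beta$ (it exists for $k=1$ when $\phi(\theta)<\beta$, and always for $k=2$). *)

From HB Require Import structures.
From mathcomp Require Import all_boot all_order all_algebra.
From mathcomp Require Import all_classical all_reals all_analysis.
Set Implicit Arguments. Unset Strict Implicit. Unset Printing Implicit Defensive.
Import Order.TTheory GRing.Theory Num.Theory numFieldNormedType.Exports.
Local Open Scope classical_set_scope.
Local Open Scope ring_scope.

Section Model.
Variable R : realType.
(* pi = P(Q=1); hq, hu : conditional joint densities of (Theta,Gamma) given Q=1, Q=0 *)
Variables (pi xq xu : R) (hq hu : R * R -> R).

Definition lr (th g : R) : R := hq (th, g) / hu (th, g).

Definition thr (tau : R) : R := ((1 - pi) * (xu + tau)) / (pi * (xq - tau)).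

(* the event {A(tau) = 1} on the theta-section: set of gamma *)
Definition Aset (th tau : R) : set R := [set g | thr tau < lr th g].

Definition smass (h : R * R -> R) (th : R) (D : set R) : R :=
  Rintegral lebesgue_measure D (fun g => h (th, g)).

(* P(Theta in d theta, Gamma in D) / d theta  (joint density of Theta and event) *)
Definition jmass (th : R) (D : set R) : R :=
  pi * smass hq th D + (1 - pi) * smass hu th D.

(* phi(theta) = P(Q = 1 | Theta = theta) *)
Definition phi (th : R) : R := pi * smass hq th setT / jmass th setT.

(* s1(theta,tau) = E[Q | Theta = theta, A(tau) = 1] *)
Definition s1 (th tau : R) : R := pi * smass hq th (Aset th tau) / jmass th (Aset th tau).

(* s2(theta,tau) = E[A(tau) | Theta = theta] *)
Definition s2 (th tau : R) : R := jmass th (Aset th tau) / jmass th setT.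
End Model.

Definition model_assumptions (R : realType) (pi xq xu : R) (hq hu : R * R -> R) : Prop :=
  [/\ 0 < pi < 1, 0 < xq & 0 < xu] /\
  [/\ measurable_fun setT hq /\ measurable_fun setT hu,
      (forall z, 0 < hq z) /\ (forall z, 0 < hu z),
      (\int[(lebesgue_measure \x lebesgue_measure)%E]_z (hq z)%:E = 1%:E)%E /\
      (\int[(lebesgue_measure \x lebesgue_measure)%E]_z (hu z)%:E = 1%:E)%E &
      (* every theta-section is integrable (conditional densities well defined) *)
      (forall th, lebesgue_measure.-integrable setT (fun g => (hq (th, g))%:E)) /\
      (forall th, lebesgue_measure.-integrable setT (fun g => (hu (th, g))%:E))] /\
      [/\ continuous (fun z : R * R => lr hq hu z.1 z.2),
          (forall g, {homo (fun th => lr hq hu th g) : a b / a < b}),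
          (forall th, {homo (fun g => lr hq hu th g) : a b / a < b}),
          (forall th (e : R), 0 < e -> exists g, lr hq hu th g < e) &
          (forall th (M : R), exists g, M < lr hq hu th g)].

From HB Require Import structures.
From mathcomp Require Import all_boot all_order all_algebra.
From mathcomp Require Import all_classical all_reals all_analysis.
From mathcomp Require Import measurable_realfun.
From mathcomp Require Import ring lra.
Set Implicit Arguments. Unset Strict Implicit. Unset Printing Implicit Defensive.
Import Order.TTheory GRing.Theory Num.Theory numFieldNormedType.Exports.
Local Open Scope classical_set_scope.
Local Open Scope ring_scope.

(* Raising tau raises the likelihood-ratio threshold thr tau, so the theta-section of
   A(tau) shrinks along the superlevel sets of gamma |-> l(theta, gamma).  The band
   removed between two thresholds has positive Lebesgue measure (l is continuous,
   increasing and onto (0, +oo)), and on it l is below the thresholds kept: removing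
   it strictly lowers the acceptance mass s2 and strictly raises the posterior s1.
   An increasing s1 and a decreasing s2 then cross strictly between tau1 and tau2,
   since s1 tau1 = s2 tau2. *)

Lemma crossing_between d (T : orderType d) d' (U : orderType d') (D : {pred T})
    (f g : T -> U) (x a b : T) :
  {in D &, {homo f : u v / (u < v)%O}} -> {in D &, {homo g : u v /~ (u < v)%O}} ->
  x \in D -> a \in D -> b \in D -> f x = g x -> f a = g b ->
  (a < b -> a < x < b)%O /\ (b < a -> b < x < a)%O.
Proof.
move=> f_lt g_lt Dx Da Db fxgx fagb.
have f_le := ltW_homo_in f_lt; have g_le := ltW_nhomo_in g_lt.
split=> ab; rewrite !ltNge; apply/andP; split; apply/negP => xab; have := ltxx (f x).
- by rewrite {2}fxgx (le_lt_trans (f_le _ _ Dx Da xab)) // fagb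
    (lt_le_trans (g_lt _ _ Db Da ab)) // g_le.
- by rewrite {1}fxgx (le_lt_trans (g_le _ _ Dx Db xab)) // -fagb
    (lt_le_trans (f_lt _ _ Da Db ab)) // f_le.
- by rewrite {2}fxgx (le_lt_trans (f_le _ _ Dx Db xab)) //
    (lt_le_trans (f_lt _ _ Db Da ab)) // fagb g_le.
- by rewrite {1}fxgx (le_lt_trans (g_le _ _ Dx Da xab)) //
    (lt_le_trans (g_lt _ _ Da Db ab)) // -fagb f_le.
Qed.

Lemma continuous_section (U V W : topologicalType) (F : U * V -> W) (u : U) :
  continuous F -> continuous (fun v => F (u, v)).
Proof.
move=> cF v; apply: (continuous_comp _ (cF (u, v))).
exact: (cvg_pair (cvg_cst u) cvg_id).
Qed.

Lemma lebesgue_measure_gt0 (R : realType) (D : set R) (a b : R) :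
  measurable D -> a < b -> `]a, b] `<=` D -> (0 < lebesgue_measure D)%E.
Proof.
move=> mD ab abD; apply: (lt_le_trans _ (le_measure lebesgue_measure
  (mem_set (measurable_itv `]a, b])) (mem_set mD) abD)).
have := lebesgue_measure_itv `]a, b]; rewrite /= lte_fin ab => ->.
by rewrite -EFinD lte_fin subr_gt0.
Qed.

Lemma Rintegral_gt0 d (T : measurableType d) (R : realType) (mu : {measure set T -> \bar R})
    (D : set T) (f : T -> R) :
  measurable D -> (0 < mu D)%E -> mu.-integrable D (EFin \o f) ->
  (forall x, D x -> 0 < f x) -> 0 < \int[mu]_(x in D) f x.
Proof.
move=> mD muD0 intf f_gt0.
have fin_f : (\int[mu]_(x in D) (EFin \o f) x \is a fin_num)%E by exact: integrable_fin_num.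
rewrite /Rintegral fine_gt0 // ltey_eq fin_f andbT lt0e integral_ge0 ?andbT; last first.
  by move=> x Dx; rewrite lee_fin ltW ?f_gt0.
apply/eqP => int_f0; have /integrableP[mf _] := intf.
have : (\int[mu]_(x in D) `|(EFin \o f) x| = 0)%E.
  rewrite -int_f0; apply: eq_integral => x /set_mem Dx.
  by rewrite /= ger0_norm // ltW ?f_gt0.
move/(ae_eq_integral_abs mu mD mf) => [N [mN muN0 DN]].
suff: (mu D <= 0)%E by rewrite leNgt muD0.
rewrite -muN0 le_measure ?inE // => x Dx; apply: DN => /= /(_ Dx) /eqP.
by rewrite eqe gt_eqF ?f_gt0.
Qed.

Lemma lt_Rintegral d (T : measurableType d) (R : realType) (mu : {measure set T -> \bar R})
    (D : set T) (f1 f2 : T -> R) :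
  measurable D -> (0 < mu D)%E ->
  mu.-integrable D (EFin \o f1) -> mu.-integrable D (EFin \o f2) ->
  (forall x, D x -> f1 x < f2 x) -> \int[mu]_(x in D) f1 x < \int[mu]_(x in D) f2 x.
Proof.
move=> mD muD0 int1 int2 f12; rewrite -subr_gt0 -RintegralB //.
apply: Rintegral_gt0 => // [|x Dx]; last by rewrite subr_gt0 f12.
by apply: (eq_integrable mD _ _ _ (integrableB mD int2 int1)) => x _; rewrite /= EFinB.
Qed.

Lemma posterior_lt (R : realFieldType) (p Q U Q' U' : R) :
  0 < p < 1 -> 0 < Q -> 0 <= U -> 0 < Q' -> 0 <= U' -> Q' * U < Q * U' ->
  p * Q' / (p * Q' + (1 - p) * U') < p * Q / (p * Q + (1 - p) * U).
Proof.
move=> /andP[p_gt0 p_lt1] Q_gt0 U_ge0 Q'_gt0 U'_ge0 ratio_lt.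
have den_gt0 (A B : R) : 0 < A -> 0 <= B -> 0 < p * A + (1 - p) * B.
  by move=> A_gt0 B_ge0; apply: ltr_wpDr; [rewrite mulr_ge0 // subr_ge0 ltW|exact: mulr_gt0].
rewrite ltr_pdivrMr ?den_gt0 // mulrAC ltr_pdivlMr ?den_gt0 // -subr_gt0.
have -> : p * Q * (p * Q' + (1 - p) * U') - p * Q' * (p * Q + (1 - p) * U)
  = p * (1 - p) * (Q * U' - Q' * U) by ring.
by rewrite !mulr_gt0 ?subr_gt0.
Qed.

Section Threshold.
Variables (R : realType) (pi xq xu : R).
Hypothesis pi01 : 0 < pi < 1.

Lemma thr_gt0 t : - xu < t < xq -> 0 < thr pi xq xu t.
Proof.
case/andP: pi01 => p_gt0 p_lt1 /andP[t_gt t_lt].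
by rewrite /thr divr_gt0 ?mulr_gt0 //; lra.
Qed.

Lemma thr_lt t1 t2 : - xu < t1 -> t1 < t2 -> t2 < xq -> thr pi xq xu t1 < thr pi xq xu t2.
Proof.
case/andP: pi01 => p_gt0 p_lt1 t1_gt t12 t2_lt.
have den_gt0 t : t < xq -> 0 < pi * (xq - t) by move=> ?; rewrite mulr_gt0 ?subr_gt0.
have den1 := den_gt0 t1 (lt_trans t12 t2_lt); have den2 := den_gt0 t2 t2_lt.
rewrite /thr ltr_pdivrMr // mulrAC ltr_pdivlMr // -subr_gt0.
have -> : (1 - pi) * (xu + t2) * (pi * (xq - t1)) - (1 - pi) * (xu + t1) * (pi * (xq - t2))
  = (1 - pi) * pi * ((t2 - t1) * (xq + xu)) by ring.
by rewrite !mulr_gt0 //; lra.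
Qed.
End Threshold.

Section SectionMass.
Variables (R : realType) (h : R * R -> R) (th : R).
Hypotheses (h_gt0 : forall z, 0 < h z)
  (h_int : lebesgue_measure.-integrable setT (fun g => (h (th, g))%:E)).

Lemma integrable_section D : measurable D ->
  lebesgue_measure.-integrable D (EFin \o (fun g => h (th, g))).
Proof. by move=> mD; apply: integrableS h_int. Qed.

Lemma integrable_sectionZ k D : measurable D ->
  lebesgue_measure.-integrable D (EFin \o (fun g => k * h (th, g))).
Proof.
move=> mD; apply: (eq_integrable mD _ _ _ (integrableZl mD k (integrable_section mD))) => g _.
by rewrite /= EFinM.
Qed.

Lemma smass_ge0 D : 0 <= smass h th D.
Proof. by apply: Rintegral_ge0 => g _; exact/ltW. Qed.

Lemma smass_gt0 D : measurable D -> (0 < lebesgue_measure D)%E -> 0 < smass h th D.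
Proof. by move=> mD D_gt0; apply: (Rintegral_gt0 mD D_gt0 (integrable_section mD)). Qed.

Lemma smass_setU D1 D2 : measurable D1 -> measurable D2 -> [disjoint D1 & D2] ->
  smass h th (D1 `|` D2) = smass h th D1 + smass h th D2.
Proof.
by move=> mD1 mD2 D12; rewrite /smass Rintegral_setU //; exact/integrable_section/measurableU.
Qed.
End SectionMass.

Section MonotoneLikelihoodRatio.
Variables (R : realType) (pi xq xu : R) (hq hu : R * R -> R) (th : R).
Hypothesis pi01 : 0 < pi < 1.
Hypotheses (hq_gt0 : forall z, 0 < hq z) (hu_gt0 : forall z, 0 < hu z)
  (hq_int : lebesgue_measure.-integrable setT (fun g => (hq (th, g))%:E))
  (hu_int : lebesgue_measure.-integrable setT (fun g => (hu (th, g))%:E)).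
Hypotheses (lr_cont : continuous (lr hq hu th))
  (lr_lt : {homo lr hq hu th : a b / a < b})
  (lr_small : forall e, 0 < e -> exists g, lr hq hu th g < e)
  (lr_large : forall M, exists g, M < lr hq hu th g).

Local Notation lrt := (lr hq hu th).
Local Notation superlevel k := [set g | k < lr hq hu th g].

Let lr_ltE : {mono lrt : a b / a < b} := leW_mono (le_mono lr_lt).
Let lr_leE : {mono lrt : a b / a <= b} := le_mono lr_lt.

Lemma lr_mulr g : lrt g * hu (th, g) = hq (th, g).
Proof. by rewrite /lr divfK ?gt_eqF. Qed.

Lemma measurable_superlevel k : measurable (superlevel k).
Proof.
have := continuous_measurable_fun lr_cont measurableT (measurable_itv `]k, +oo[).
by rewrite setTI preimage_itvoy.
Qed.

Lemma lr_attains k : 0 < k -> exists c, lrt c = k.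
Proof.
move=> k_gt0; have [a lra_lt] := lr_small k_gt0; have [b lrb_gt] := lr_large k.
have ab : a <= b by rewrite -lr_leE ltW // (lt_trans lra_lt).
have [|c _ lrc] := @IVT _ lrt a b k ab (continuous_subspaceT lr_cont); last by exists c.
by rewrite ge_min le_max (ltW lra_lt) (ltW lrb_gt) orbT.
Qed.

Lemma lebesgue_superlevel_gt0 k : (0 < lebesgue_measure (superlevel k))%E.
Proof.
have [c lrc_gt] := lr_large k.
have c_lt : c < c + 1 by rewrite ltrDl.
apply: (lebesgue_measure_gt0 (measurable_superlevel k) c_lt) => x /=.
by rewrite in_itv /= => /andP[cx _]; exact: lt_trans lrc_gt (lr_lt cx).
Qed.

Lemma lebesgue_band_gt0 k1 k2 : 0 < k1 < k2 ->
  (0 < lebesgue_measure (superlevel k1 `\` superlevel k2))%E.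
Proof.
case/andP=> k1_gt0 k12; have [c1 lrc1] := lr_attains k1_gt0.
have [c2 lrc2] := lr_attains (lt_trans k1_gt0 k12).
have c12 : c1 < c2 by rewrite -lr_ltE lrc1 lrc2.
apply: (lebesgue_measure_gt0 _ c12) => [|x /=].
  by apply: measurableD; exact: measurable_superlevel.
rewrite in_itv /= => /andP[c1x xc2]; split; first by rewrite -lrc1 lr_ltE.
by apply/negP; rewrite -leNgt -lrc2 lr_leE.
Qed.

Lemma smass_band_le k1 k2 :
  smass hq th (superlevel k1 `\` superlevel k2) <=
  k2 * smass hu th (superlevel k1 `\` superlevel k2).
Proof.
have mB : measurable (superlevel k1 `\` superlevel k2).
  by apply: measurableD; exact: measurable_superlevel.
rewrite /smass -RintegralZl //; last exact: integrable_section.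
apply: le_Rintegral => //; [exact: integrable_section|exact: integrable_sectionZ|].
by move=> g [_ /negP]; rewrite -leNgt -lr_mulr => lrg_le; rewrite ler_wpM2r // ltW.
Qed.

Lemma smass_superlevel_gt k :
  k * smass hu th (superlevel k) < smass hq th (superlevel k).
Proof.
have mS := measurable_superlevel k.
rewrite /smass -RintegralZl //; last exact: integrable_section.
apply: lt_Rintegral (lebesgue_superlevel_gt0 k) _ _ _ => //;
  [exact: integrable_sectionZ|exact: integrable_section|].
by move=> g /= lrg_gt; rewrite -lr_mulr ltr_pM2r.
Qed.

Lemma superlevel_band_split (h : R * R -> R) k1 k2 :
  lebesgue_measure.-integrable setT (fun g => (h (th, g))%:E) -> k1 <= k2 ->
  smass h th (superlevel k1) =
  smass h th (superlevel k2) + smass h th (superlevel k1 `\` superlevel k2).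
Proof.
move=> h_int k12; have sub21 : superlevel k2 `<=` superlevel k1.
  by move=> g /=; exact: le_lt_trans.
rewrite -{1}(setDUK sub21) smass_setU //; try exact: measurable_superlevel.
- by apply: measurableD; exact: measurable_superlevel.
- by apply/disj_setPLR => g S2g [].
Qed.

Lemma jmass_band_split k1 k2 : k1 <= k2 ->
  jmass pi hq hu th (superlevel k1) =
  jmass pi hq hu th (superlevel k2) +
  jmass pi hq hu th (superlevel k1 `\` superlevel k2).
Proof.
move=> k12; rewrite /jmass (superlevel_band_split hq_int k12).
by rewrite (superlevel_band_split hu_int k12); ring.
Qed.

Lemma jmass_gt0 D : measurable D -> (0 < lebesgue_measure D)%E ->
  0 < jmass pi hq hu th D.
Proof.
case/andP: pi01 => p_gt0 p_lt1 mD D_gt0.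
by rewrite /jmass addr_gt0 ?mulr_gt0 ?subr_gt0 ?smass_gt0.
Qed.

Lemma s1_lt t1 t2 : - xu < t1 -> t1 < t2 -> t2 < xq ->
  s1 pi xq xu hq hu th t1 < s1 pi xq xu hq hu th t2.
Proof.
move=> t1_gt t12 t2_lt; rewrite /s1 /jmass /Aset.
set k1 := thr pi xq xu t1; set k2 := thr pi xq xu t2.
have k1_gt0 : 0 < k1 by rewrite thr_gt0 // t1_gt (lt_trans t12).
have k12 : k1 < k2 by exact: thr_lt.
rewrite (superlevel_band_split hq_int (ltW k12)) (superlevel_band_split hu_int (ltW k12)).
set Q := smass hq th _; set U := smass hu th _.
set dQ := smass hq th _; set dU := smass hu th _.
have U_ge0 : 0 <= U by exact: smass_ge0.
have dQ_ge0 : 0 <= dQ by exact: smass_ge0.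
have dU_gt0 : 0 < dU.
  apply: smass_gt0 => //; first by apply: measurableD; exact: measurable_superlevel.
  by apply: lebesgue_band_gt0; rewrite k1_gt0.
have Q_gt : k2 * U < Q by exact: smass_superlevel_gt.
have dQ_le : dQ <= k2 * dU by exact: smass_band_le.
have Q_gt0 : 0 < Q by apply: le_lt_trans Q_gt; rewrite mulr_ge0 // ltW // (lt_trans k1_gt0).
(* dQ / dU <= k2 < Q / U *)
have mix_lt : (Q + dQ) * U < Q * (U + dU) by nra.
by apply: posterior_lt => //; lra.
Qed.

Lemma s2_lt t1 t2 : - xu < t1 -> t1 < t2 -> t2 < xq ->
  s2 pi xq xu hq hu th t2 < s2 pi xq xu hq hu th t1.
Proof.
move=> t1_gt t12 t2_lt; rewrite /s2 /Aset.
set k1 := thr pi xq xu t1; set k2 := thr pi xq xu t2.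
have k1_gt0 : 0 < k1 by rewrite thr_gt0 // t1_gt (lt_trans t12).
have k12 : k1 < k2 by exact: thr_lt.
have setT_gt0 : (0 < lebesgue_measure [set: R])%E.
  by apply: (lebesgue_measure_gt0 _ ltr01) => //; exact: subsetT.
rewrite ltr_pM2r ?invr_gt0 ?jmass_gt0 // (jmass_band_split (ltW k12)) ltrDl.
apply: jmass_gt0; first by apply: measurableD; exact: measurable_superlevel.
by apply: lebesgue_band_gt0; rewrite k1_gt0.
Qed.
End MonotoneLikelihoodRatio.

Lemma s1_increasing (R : realType) (pi xq xu : R) (hq hu : R * R -> R) (th : R) :
  model_assumptions pi xq xu hq hu ->
  {in `]- xu, xq[ &, {homo s1 pi xq xu hq hu th : a b / a < b}}.
Proof.
case=> [[pi01 _ _] [[_ [hq_gt0 hu_gt0] _ [hq_int hu_int]]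
  [lr_cont _ lr_lt lr_small lr_large]]].
move=> t1 t2; rewrite !in_itv /= => /andP[t1_gt _] /andP[_ t2_lt] t12.
exact: (s1_lt pi01 hq_gt0 hu_gt0 (hq_int th) (hu_int th)
  (continuous_section (u := th) lr_cont) (lr_lt th) (lr_small th) (lr_large th) t1_gt t12 t2_lt).
Qed.

Lemma s2_decreasing (R : realType) (pi xq xu : R) (hq hu : R * R -> R) (th : R) :
  model_assumptions pi xq xu hq hu ->
  {in `]- xu, xq[ &, {homo s2 pi xq xu hq hu th : a b /~ a < b}}.
Proof.
case=> [[pi01 _ _] [[_ [hq_gt0 hu_gt0] _ [hq_int hu_int]]
  [lr_cont _ lr_lt lr_small lr_large]]].
move=> t2 t1; rewrite !in_itv /= => /andP[_ t2_lt] /andP[t1_gt _] t12.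
exact: (s2_lt pi01 hq_gt0 hu_gt0 (hq_int th) (hu_int th)
  (continuous_section (u := th) lr_cont) (lr_lt th) (lr_small th) (lr_large th) t1_gt t12 t2_lt).
Qed.

Theorem mainTheorem11 (R : realType) (pi xq xu : R) (hq hu : R * R -> R)
  (c th tau_star tau1 tau2 : R) :
  model_assumptions pi xq xu hq hu ->
  - xu < c < xq ->
  phi pi hq hu th < (xu + c) / (xq + xu) ->
  - xu < tau_star < xq ->
  s1 pi xq xu hq hu th tau_star = s2 pi xq xu hq hu th tau_star ->
  - xu < tau1 < xq ->
  s1 pi xq xu hq hu th tau1 = (xu + c) / (xq + xu) ->
  - xu < tau2 < xq ->
  s2 pi xq xu hq hu th tau2 = (xu + c) / (xq + xu) ->
  (tau1 < tau2 -> tau1 < tau_star < tau2) /\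
  (tau2 < tau1 -> tau2 < tau_star < tau1).
Proof.
(* phi th < beta only guarantees that tau1 exists; here tau1 is given. *)
move=> model _ _ tau_star_in s12_star tau1_in s1_tau1 tau2_in s2_tau2.
apply: (crossing_between (s1_increasing th model) (s2_decreasing th model));
  rewrite ?in_itv //.
by rewrite s1_tau1 s2_tau2.
Qed.
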